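(* For $\mathbf k\in\mathbb Z^r_{++}$ let $\tilde C^d(\lambda,\mu,\mathbf k)=\frac{\prod_{1\le i\le j\le r}(\lambda+\mu-1-\frac d2(i+j-2))_{k_i+k_j}}{\prod_{1\le i<j\le r+1}(\lambda+\mu-1-\frac d2(i+j-3))_{k_i+k_j}}$ with $k_{r+1}=0$. If $1\le m_1\le m_2\le r$, $k_1=\dots=k_{m_1}$ and $k_{m_2+1}=0$, then $$\{(\lambda,\mu)\in\mathbb C^2:\tilde C^d(\lambda,\mu,\mathbf k)=0\}\subset\Bigl\{(\lambda,\mu):\ \tfrac d2(m_1-1)-2k_1+2\le\lambda+\mu\le d(m_2-1)-k_{m_2}+1\Bigr\}$$ if $k_1\ge1$, and the set is empty if $k_1=0$. In particular, for $m=0,1,\dots,r-1$, if $k_{m+1}=0$ then $\tilde C^d(\lambda,\mu,\mathbf k)\ne0$ for all real $\lambda,\mu\ge\frac d2m$.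
   Context: $r\ge1$ integer, $d>0$ real, $\mathbb Z^r_{++}=\{\mathbf k\in\mathbb Z^r:k_1\ge\dots\ge k_r\ge0\}$, $(a)_m=a(a+1)\cdots(a+m-1)$. $\tilde C^d$ is a rational function of $\lambda+\mu$; its zero set means the points where the reduced rational function vanishes (the inequalities in particular force $\lambda+\mu$ real). *)

From HB Require Import structures.
From mathcomp Require Import all_boot all_order all_algebra.
From mathcomp Require Import reals complex.
Set Implicit Arguments. Unset Strict Implicit. Unset Printing Implicit Defensive.
Import Order.TTheory GRing.Theory Num.Theory.
Local Open Scope ring_scope.

(* Rising factorial as a polynomial in the variable s = lambda + mu:
   poch c n = (s + c)_n = prod_{t < n} (s + c + t). *)
Definition poch (F : fieldType) (c : F) (n : nat) : {poly F} :=
  \prod_(t < n) ('X + (c + t%:R)%:P).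

Definition kext (r : nat) (k : nat -> nat) (i : nat) : nat :=
  if (1 <= i <= r)%N then k i else 0%N.

Section Ct.
Variables (R : realType) (d : R) (r : nat) (k : nat -> nat).
Local Notation C := R[i].
Local Notation kk := (kext r k).

Definition Ct_num : {poly C} :=
  \prod_(1 <= i < r.+1) \prod_(i <= j < r.+1)
     poch (((- 1 - d / 2 * ((i + j)%:R - 2)) : R)%:C)%C (kk i + kk j).

Definition Ct_den : {poly C} :=
  \prod_(1 <= i < r.+2) \prod_(i.+1 <= j < r.+2)
     poch (((- 1 - d / 2 * ((i + j)%:R - 3)) : R)%:C)%C (kk i + kk j).

(* s is a zero of the reduced rational function Ct_num / Ct_den:
   the numerator divided by gcd(num, den) vanishes at s. *)
Definition Ct_zero (s : C) : bool :=
  (Ct_num %/ gcdp Ct_num Ct_den).[s] == 0.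
End Ct.

From HB Require Import structures.
From mathcomp Require Import all_boot all_order all_algebra.
From mathcomp Require Import reals complex.
From mathcomp Require Import ring lra zify.
Import Order.TTheory GRing.Theory Num.Theory.
Local Open Scope ring_scope.

(* Splitting
     (s + c)_(k_i + k_j) = (s + c)_(k_i + k_(j+1)) (s + c + k_i + k_(j+1))_(k_j - k_(j+1)),
   the (i, j) factor of the numerator is the (i, j + 1) factor of the denominator
   times a residual rising factorial.  So the denominator divides the numerator and
   the reduced function is the polynomial of residual factors, whose zeros are the
   reals s = 1 + d/2 (i + j - 2) - (k_i + k_(j+1) + t) with t < k_j - k_(j+1).
   Such a zero forces a strict drop k_(j+1) < k_j, hence m1 <= j <= m2, and the
   bounds follow from k_(m2) <= k_i + k_(j+1) + t < 2 k_1. *)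

Lemma pochD (F : fieldType) (c : F) m n :
  poch c (m + n) = poch c m * poch (c + m%:R) n.
Proof.
rewrite /poch big_split_ord /=; congr (_ * _); apply: eq_bigr => t _ /=.
by rewrite natrD addrA.
Qed.

Lemma poch_monic (F : fieldType) (c : F) n : poch c n \is monic.
Proof. by apply: monic_prod => t _; apply: monicXaddC. Qed.

Lemma root_pochP (F : fieldType) (c x : F) n :
  root (poch c n) x -> exists2 t, (t < n)%N & x = - (c + t%:R).
Proof.
rewrite /root /poch horner_prod => /prodf_eq0 [t _]; rewrite hornerD hornerX hornerC.
by rewrite addr_eq0 => /eqP ->; exists t.
Qed.

Lemma root_prod_seq (F : fieldType) (I : Type) (s : seq I) (G : I -> {poly F}) x :
  root (\prod_(i <- s) G i) x = has (fun i => root (G i) x) s.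
Proof. by rewrite /root horner_prod prodf_seq_eq0. Qed.

Lemma root_divp_gcdp_mull (F : fieldType) (p q : {poly F}) x : q != 0 ->
  root (p * q %/ gcdp (p * q) q) x = root p x.
Proof.
move=> q_neq0; have gcd_q : gcdp (p * q) q %= q.
  exact: eqp_trans (gcdpC _ _) (gcdp_mull _ _).
by rewrite (eqp_root (eqp_divr (p * q) gcd_q)) mulpK.
Qed.

Lemma kext_le r k i : (kext r k i <= k i)%N.
Proof. by rewrite /kext; case: ifP. Qed.

Lemma kext_nonincreasing r k :
  (forall i, (1 <= i)%N -> (i < r)%N -> (k i.+1 <= k i)%N) ->
  forall i j, (0 < i)%N -> (i <= j)%N -> (kext r k j <= kext r k i)%N.
Proof.
move=> k_step i j i_gt0 le_ij.
apply: (@homo_leq_in _ [pred n | 0 < n]%N (kext r k) (fun a b => b <= a)%N) => //.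
- by move=> b a c ba cb; apply: leq_trans ba.
- by move=> a b /= a_gt0 _ n /andP [an _]; apply: leq_trans an.
- move=> n; rewrite inE => n_gt0 _; rewrite /kext n_gt0 /=.
  by case: ifP => h1; case: ifP => h2 //; [apply: k_step | lia].
- exact: leq_trans le_ij.
Qed.

Arguments kext_nonincreasing {r k} _ {i j}.

Section CtZeros.
Variables (R : realType) (d : R) (r : nat) (k : nat -> nat).
Hypothesis k_step : forall i, (1 <= i)%N -> (i < r)%N -> (k i.+1 <= k i)%N.
Local Notation C := R[i].
Local Notation kk := (kext r k).

Definition Ct_offset (i j : nat) : R := - 1 - d / 2 * ((i + j)%:R - 2).

Definition Ct_reduced : {poly C} :=
  \prod_(1 <= i < r.+1) \prod_(i <= j < r.+1)
     poch ((Ct_offset i j)%:C + (kk i + kk j.+1)%:R)%C (kk j - kk j.+1).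

Lemma Ct_num_factor : Ct_num d r k = Ct_den d r k * Ct_reduced.
Proof.
rewrite /Ct_den big_nat_recr //= (@big_geq _ _ _ r.+2 r.+2) // mulr1 -big_split /=.
apply: eq_big_nat => i /andP [i_ge1 i_le_r].
rewrite big_add1 /= -big_split /=; apply: eq_big_nat => j /andP [le_ij j_le_r].
have -> : (- 1 - d / 2 * ((i + j.+1)%:R - 3)) = Ct_offset i j.
  by rewrite /Ct_offset addnS mulrSr; ring.
rewrite -pochD -addnA subnKC //.
by apply: kext_nonincreasing => //; lia.
Qed.

Lemma Ct_zeroE s : Ct_zero d r k s = root Ct_reduced s.
Proof.
rewrite /Ct_zero Ct_num_factor mulrC -/(root _ s) root_divp_gcdp_mull //.
by apply: monic_neq0; do 2!apply: monic_prod => ? _; apply: poch_monic.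
Qed.

Definition Ct_root (i j t : nat) : R :=
  1 + d / 2 * ((i + j)%:R - 2) - (kk i + kk j.+1 + t)%:R.

Lemma Ct_zero_root s : Ct_zero d r k s ->
  exists i j t, [/\ (0 < i)%N, (i <= j)%N, (j <= r)%N,
    (t < kk j - kk j.+1)%N & s = (Ct_root i j t)%:C%C].
Proof.
rewrite Ct_zeroE /Ct_reduced root_prod_seq; case/hasP => i.
rewrite mem_index_iota root_prod_seq => /andP [i_gt0 i_le_r] /hasP [j].
rewrite mem_index_iota => /andP [le_ij j_le_r] /root_pochP [t lt_t ->].
exists i, j, t; split => //.
have natC n : (n%:R : C) = (n%:R)%:C%C by rewrite rmorph_nat.
rewrite !natC -!rmorphD -rmorphN /Ct_root /Ct_offset natrD; congr (_%:C)%C; ring.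
Qed.

Lemma kext_jump_le {m j} :
  kk m.+1 = 0%N -> (0 < j)%N -> (kk j.+1 < kk j)%N -> (j <= m)%N.
Proof.
move=> km0 j_gt0 jump; rewrite leqNgt; apply/negP => lt_mj.
by have := kext_nonincreasing k_step (ltn0Sn m) lt_mj; rewrite km0; lia.
Qed.

Lemma kext_jump_ge {m j} : (m <= r)%N ->
  (forall i, (1 <= i <= m)%N -> k i = k 1%N) ->
  (kk j.+1 < kk j)%N -> (0 < j)%N -> (m <= j)%N.
Proof.
move=> m_le_r k_plateau jump j_gt0; rewrite leqNgt; apply/negP => lt_jm.
have kk_plateau n : (0 < n)%N -> (n <= m)%N -> kk n = k 1%N.
  by move=> n_gt0 le_nm; rewrite /kext n_gt0 (leq_trans le_nm) // k_plateau ?n_gt0.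
by move: jump; rewrite !kk_plateau //; lia.
Qed.

Lemma kext_le_k1 {i} : (0 < i)%N -> (kk i <= k 1%N)%N.
Proof.
by move=> i_gt0; apply: leq_trans (kext_le r k 1); apply: kext_nonincreasing.
Qed.

Lemma Ct_zero_bounds m1 m2 s :
  0 < d -> (1 <= m1)%N -> (m1 <= m2)%N -> (m2 <= r)%N ->
  (forall i, (1 <= i <= m1)%N -> k i = k 1%N) -> kk m2.+1 = 0%N ->
  Ct_zero d r k s ->
  (d / 2 * (m1 - 1)%:R - 2 * (k 1%N)%:R + 2)%:C%C <= s
  /\ s <= (d * (m2 - 1)%:R - (k m2)%:R + 1)%:C%C.
Proof.
move=> d_gt0 m1_gt0 le_m12 m2_le_r k_plateau km2 /Ct_zero_root.
move=> [i [j [t [i_gt0 le_ij j_le_r lt_t ->]]]]; rewrite !lecR /Ct_root.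
have jump : (kk j.+1 < kk j)%N by lia.
have j_gt0 := leq_trans i_gt0 le_ij.
have le_jm2 := kext_jump_le km2 j_gt0 jump.
have le_m1j := kext_jump_ge (leq_trans le_m12 m2_le_r) k_plateau jump j_gt0.
have ki_le := kext_le_k1 i_gt0; have kj_le := kext_le_k1 j_gt0.
have km2_le : (k m2 <= kk i)%N.
  have -> : k m2 = kk m2 by rewrite /kext (leq_trans m1_gt0 le_m12) m2_le_r.
  by apply: kext_nonincreasing => //; lia.
have N_lt : ((kk i + kk j.+1 + t) + 1 <= 2 * k 1%N)%N by lia.
have N_ge : (k m2 <= kk i + kk j.+1 + t)%N by lia.
have ij_ge : (m1 + 1 <= i + j)%N by lia.
have ij_le : (i + j <= 2 * m2)%N by lia.
move: N_lt N_ge; move: (kk i + kk j.+1 + t)%N => N.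
move: ij_ge ij_le; rewrite -!(ler_nat R) ?natrD ?natrM ?natrB //; try lia.
move=> ij_ge ij_le N_lt N_ge.
have p1 : 0 <= d * (i%:R + j%:R - m1%:R - 1) by apply: mulr_ge0; lra.
have p2 : 0 <= d * (m2%:R + m2%:R - i%:R - j%:R) by apply: mulr_ge0; lra.
split; nra.
Qed.

Lemma Ct_zero_k1_eq0 s : k 1%N = 0%N -> ~~ Ct_zero d r k s.
Proof.
move=> k1_0; apply/negP => /Ct_zero_root [i [j [t [i_gt0 le_ij _ lt_t _]]]].
by have := kext_le_k1 (leq_trans i_gt0 le_ij); rewrite k1_0; lia.
Qed.

Lemma Ct_zero_lt m s : 0 < d -> kk m.+1 = 0%N ->
  Ct_zero d r k s -> s < (d * m%:R)%:C%C.
Proof.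
move=> d_gt0 km0 /Ct_zero_root [i [j [t [i_gt0 le_ij _ lt_t ->]]]].
rewrite ltcR /Ct_root.
have jump : (kk j.+1 < kk j)%N by lia.
have le_jm := kext_jump_le km0 (leq_trans i_gt0 le_ij) jump.
have kji : (kk j <= kk i)%N by apply: kext_nonincreasing.
have N_ge : (1 <= kk i + kk j.+1 + t)%N by lia.
have ij_le : (i + j <= 2 * m)%N by lia.
have m_gt0 : (0 < m)%N by lia.
move: N_ge ij_le m_gt0; move: (kk i + kk j.+1 + t)%N => N.
rewrite -!(ler_nat R) ?natrD ?natrM => N_ge ij_le m_gt0.
have p : 0 <= d * (m%:R + m%:R - i%:R - j%:R) by apply: mulr_ge0; lra.
have q : 0 < d * m%:R by apply: mulr_gt0 => //; lra.
nra.
Qed.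
End CtZeros.

Arguments Ct_zero_lt {R d r k} _ {m s}.
Arguments Ct_zero_bounds {R d r k} _ {m1 m2 s}.
Arguments Ct_zero_k1_eq0 {R d r k} _ {s}.

Theorem proposition8p6 (R : realType) (d : R) (r : nat) (k : nat -> nat) :
  0 < d -> (1 <= r)%N ->
  (forall i : nat, (1 <= i)%N -> (i < r)%N -> (k i.+1 <= k i)%N) ->
  (forall m1 m2 : nat, (1 <= m1)%N -> (m1 <= m2)%N -> (m2 <= r)%N ->
     (forall i : nat, (1 <= i <= m1)%N -> k i = k 1%N) ->
     kext r k m2.+1 = 0%N ->
     ((1 <= k 1%N)%N ->
        forall lam mu : R[i], Ct_zero d r k (lam + mu) ->
          (((d / 2 * (m1 - 1)%:R - 2 * (k 1%N)%:R + 2) : R)%:C)%C <= lam + mu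
          /\ lam + mu <= (((d * (m2 - 1)%:R - (k m2)%:R + 1) : R)%:C)%C)
     /\ (k 1%N = 0%N -> forall lam mu : R[i], ~~ Ct_zero d r k (lam + mu)))
  /\
  (forall m : nat, (m < r)%N -> kext r k m.+1 = 0%N ->
     forall lam mu : R, d / 2 * m%:R <= lam -> d / 2 * m%:R <= mu ->
       ~~ Ct_zero d r k (((lam + mu) : R)%:C)%C).
Proof.
move=> d_gt0 _ k_step; split.
  move=> m1 m2 m1_gt0 le_m12 m2_le_r k_plateau km2; split.
    move=> _ lam mu.
    exact: (Ct_zero_bounds k_step d_gt0 m1_gt0 le_m12 m2_le_r k_plateau km2).
  by move=> k1_0 lam mu; apply: (Ct_zero_k1_eq0 k_step).
move=> m _ km0 lam mu lam_ge mu_ge; apply/negP => /(Ct_zero_lt k_step d_gt0 km0).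
rewrite ltcR ltNge => /negP; apply.
by rewrite [d * _]splitr mulrAC; apply: lerD.
Qed.
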